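(* Let $X$ and $Y$ be objects of an $R$-linear triangulated category $\mathsf{T}$ with $\operatorname{Hom}^*_{\mathsf{T}}(X,Y)$ in $\mathsf{art}^{\mathsf{fl}}(R)$, and let $z\in R^d$. If for all $n\ll0$ there are short exact sequences $$0\to\operatorname{Hom}_{\mathsf{T}}(X,\Sigma^n(Y/\!\!/z))\to\operatorname{Hom}_{\mathsf{T}}(X,\Sigma^{n+1}Y)\to\operatorname{Hom}_{\mathsf{T}}(X,\Sigma^{n+d+1}Y)\to0$$ (of $R^0$-modules), then $h(X,Y/\!\!/z)(n)=h(X,Y)(n+d+1)-h(X,Y)(n+1)$ for all $n\ll0$, and for every $s\ge1$ one has $\Delta^{-s+1}h(X,Y/\!\!/z)(n)=-\Delta^{-s}h(X,Y)(n)$ for all $n\ll0$.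
   Context: $R=\bigoplus_{n\ge 0}R^n$ is a graded-commutative Noetherian ring generated over $R^0$ by $R^d$, $d\ge2$ even (standing assumption). $\mathsf{T}$ is a triangulated category with suspension $\Sigma$ that is $R$-linear: a graded ring homomorphism $\phi$ from $R$ to the graded center of $\mathsf{T}$ (degree-$n$ elements: natural transformations $\eta:\mathrm{id}\to\Sigma^n$ with $\eta\Sigma=(-1)^n\Sigma\eta$), giving $\phi_Y:R\to\operatorname{Hom}^*_{\mathsf{T}}(Y,Y)$ and making $\operatorname{Hom}^*_{\mathsf{T}}(X,Y)=\bigoplus_n\operatorname{Hom}_{\mathsf{T}}(X,\Sigma^nY)$ a graded $R$-module. $\lambda^n(X,Y)=\ell_{R^0}\operatorname{Hom}_{\mathsf{T}}(X,\Sigma^nY)$. $\mathsf{art}^{\mathsf{fl}}(R)$: $\bigoplus_{n\le n_0}\operatorname{Hom}_{\mathsf{T}}(X,\Sigma^nY)$ is Artinian over $R$ for some $n_0$ and all $\lambda^n(X,Y)<\infty$. $Y/\!\!/z$ is defined by a distinguished triangle $Y\xrightarrow{\phi_Y(z)}\Sigma^dY\to Y/\!\!/z\to\Sigma Y$. $h(X,Y)(n)=\sum_{i=0}^{d-1}(-1)^{n+i}\lambda^{n+i}(X,Y)$. Negative difference operator: $\Delta^{-1}f(n)=f(n+1)-f(n+d+1)$, $\Delta^0f=f$, $\Delta^{-s}f=\Delta^{-1}(\Delta^{-s+1}f)$ for $s\ge1$. *)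

From HB Require Import structures.
From mathcomp Require Import all_boot all_order all_algebra.
Set Implicit Arguments. Unset Strict Implicit. Unset Printing Implicit Defensive.
Import Order.TTheory GRing.Theory Num.Theory.
Local Open Scope ring_scope.

Definition is_submod (R : comPzRingType) (M : lmodType R) (P : M -> Prop) : Prop :=
  [/\ P 0, (forall x y, P x -> P y -> P (x + y)) & (forall (a : R) x, P x -> P (a *: x))].

Definition strict_chain (R : comPzRingType) (M : lmodType R) (k : nat)
    (c : nat -> M -> Prop) : Prop :=
  (forall i, (i <= k)%N -> is_submod (c i)) /\
  (forall i, (i < k)%N ->
     (forall x, c i x -> c i.+1 x) /\ (exists x, c i.+1 x /\ ~ c i x)).

(* ell_R(M) = k : the supremum of the lengths of strict chains of submodules
   is finite and equals k (composition length). *)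
Definition has_length (R : comPzRingType) (M : lmodType R) (k : nat) : Prop :=
  (exists c : nat -> M -> Prop, strict_chain k c) /\
  (forall j (c : nat -> M -> Prop), strict_chain j c -> (j <= k)%N).

Definition short_exact (R : comPzRingType) (A B C : lmodType R)
    (f : {linear A -> B}) (g : {linear B -> C}) : Prop :=
  [/\ injective f,
      (forall y, (exists x, f x = y) <-> g y = 0)
    & (forall w, exists y, g y = w)].

Definition hfun (d : nat) (lam : int -> nat) (n : int) : int :=
  \sum_(i < d) (-1) ^ (n + (i : nat)%:Z) * (lam (n + (i : nat)%:Z))%:Z.

Definition negdiff (d : nat) (f : int -> int) (n : int) : int :=
  f (n + 1) - f (n + d%:Z + 1).

Fixpoint negdiff_iter (d s : nat) (f : int -> int) : int -> int :=
  match s with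
  | 0 => f
  | s'.+1 => negdiff d (negdiff_iter d s' f)
  end.

(* Length is additive on short exact sequences 0 -> A -> B -> C -> 0: a strict chain
   in B gives, by preimage under f and image under g, chains in A and C, and at each
   strict step of the chain in B at least one of the two strictly grows; conversely,
   chains in A and C concatenate to one in B.  Hence
   lambda^(n+1)(Y) = lambda^n(Y//z) + lambda^(n+d+1)(Y) for n << 0, and as d is even,
   the alternating sums give h(Y//z) = -Delta^{-1} h(Y) for n << 0.  Delta^{-1} only
   looks at values to the right of n, so it preserves equality for n << 0, and
   iterating it gives the second claim. *)

From mathcomp Require Import all_boot all_order all_algebra.
From mathcomp Require Import zify ring.
From Stdlib Require Import Classical.
Import Order.TTheory GRing.Theory Num.Theory.
Local Open Scope ring_scope.

Definition fimage {A B : Type} (f : A -> B) (P : A -> Prop) : B -> Prop :=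
  fun y => exists2 x, P x & f x = y.

Section Submodules.

Context {R : comPzRingType} {A B : lmodType R}.

Lemma is_submod_preim (f : {linear A -> B}) {P : B -> Prop} :
  is_submod P -> is_submod (P \o f).
Proof.
move=> [P0 PD PZ]; split=> /=.
- by rewrite linear0.
- by move=> x y Px Py; rewrite linearD; apply: PD.
- by move=> a x Px; rewrite linearZ; apply: PZ.
Qed.

Lemma is_submod_fimage (f : {linear A -> B}) {P : A -> Prop} :
  is_submod P -> is_submod (fimage f P).
Proof.
move=> [P0 PD PZ]; split.
- by exists 0; rewrite ?linear0.
- by move=> _ _ [x Px <-] [y Py <-]; exists (x + y); rewrite ?linearD //; apply: PD.
- by move=> a _ [x Px <-]; exists (a *: x); rewrite ?linearZ //; apply: PZ.
Qed.

End Submodules.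

Section ChainsTo.

Context {R : comPzRingType} {M : lmodType R}.

Definition chain_to (P : M -> Prop) (m : nat) : Prop :=
  exists2 e, strict_chain m e & forall x, e m x <-> P x.

Lemma chain_to0 (P : M -> Prop) : is_submod P -> chain_to P 0.
Proof. by move=> sP; exists (fun _ => P) => //; split. Qed.

Lemma chain_to_le_length {P : M -> Prop} {m a} :
  has_length M a -> chain_to P m -> (m <= a)%N.
Proof. by move=> [_ Hmax] [e He _]; apply: Hmax He. Qed.

Lemma chain_to_grow {P Q : M -> Prop} {m} :
  chain_to P m -> is_submod Q -> (forall x, P x -> Q x) ->
  exists m', [/\ chain_to Q m', (m <= m')%N & (exists x, Q x /\ ~ P x) -> (m < m')%N].
Proof.
move=> [e [esub est] eP] sQ PQ.
have [[y [Qy nPy]]|PeqQ] := classic (exists x, Q x /\ ~ P x); last first.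
  exists m; split=> //.
  exists e; first by split.
  move=> x; split=> [/eP/PQ //|Qx]; apply/eP; apply: NNPP => nPx.
  by apply: PeqQ; exists x.
exists m.+1; split=> //; exists (fun i => if (i <= m)%N then e i else Q); last first.
  by rewrite ltnn.
split=> [i _|i lt_im]; first by case: ifP => // /esub.
rewrite -ltnS lt_im; have [/est //|ge_im] := ltnP i m.
have -> : i = m by apply/eqP; rewrite eqn_leq -ltnS lt_im ge_im.
by split=> [x /eP/PQ //|]; exists y; split=> // /eP.
Qed.

End ChainsTo.

Section ShortExact.

Context {R : comPzRingType} {A B C : lmodType R}.
Context {f : {linear A -> B}} {g : {linear B -> C}} (fg_exact : short_exact f g).

Lemma short_exact_strict_step {P Q : B -> Prop} :
  is_submod P -> is_submod Q -> (forall y, P y -> Q y) -> (exists y, Q y /\ ~ P y) ->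
  (exists x, Q (f x) /\ ~ P (f x)) \/ (exists z, fimage g Q z /\ ~ fimage g P z).
Proof.
have [_ ker_g _] := fg_exact.
move=> [_ PD _] [_ QD QZ] PQ [y [Qy nPy]]; apply: NNPP => /not_or_and[nA nC].
have [y' Py' gy'] : fimage g P (g y).
  by apply: NNPP => nPgy; apply: nC; exists (g y); split=> //; exists y.
have [u fu] : exists u, f u = y - y' by apply/ker_g; rewrite linearB gy' subrr.
have Pfu : P (f u).
  apply: NNPP => nPfu; apply: nA; exists u; split=> //.
  by rewrite fu; apply: QD => //; rewrite -scaleN1r; apply/QZ/PQ.
by apply: nPy; rewrite -(subrK y' y) -fu; apply: PD.
Qed.

Lemma short_exact_chain_le {a c j} {b : nat -> B -> Prop} :
  has_length A a -> has_length C c -> strict_chain j b -> (j <= a + c)%N.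
Proof.
move=> lenA lenC [bsub bst].
suff /(_ j (leqnn j)) [p [q [chA chC le_jpq]]] : forall k, (k <= j)%N -> exists p q,
    [/\ chain_to (b k \o f) p, chain_to (fimage g (b k)) q & (k <= p + q)%N].
  apply: (leq_trans le_jpq).
  exact: leq_add (chain_to_le_length lenA chA) (chain_to_le_length lenC chC).
elim=> [_|k IH lt_kj].
  exists 0%N, 0%N; split=> //; apply: chain_to0.
    exact/is_submod_preim/bsub.
  exact/is_submod_fimage/bsub.
have [p [q [chA chC le_kpq]]] := IH (ltnW lt_kj).
have [incl strict] := bst k lt_kj.
have sbk := bsub k (ltnW lt_kj); have sbk1 := bsub k.+1 lt_kj.
have incl_img z : fimage g (b k) z -> fimage g (b k.+1) z.
  by case=> y /incl bk1y <-; exists y.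
have [p' [chA' le_pp' lt_pp']] :=
  chain_to_grow chA (is_submod_preim f sbk1) (fun x => incl (f x)).
have [q' [chC' le_qq' lt_qq']] :=
  chain_to_grow chC (is_submod_fimage g sbk1) incl_img.
exists p', q'; split=> //.
have [/lt_pp' lt|/lt_qq' lt] := short_exact_strict_step sbk sbk1 incl strict.
  by rewrite (leq_ltn_trans le_kpq) // -addSn leq_add.
by rewrite (leq_ltn_trans le_kpq) // -addnS leq_add.
Qed.

Lemma short_exact_chain_cat {a c} {eA : nat -> A -> Prop} {eC : nat -> C -> Prop} :
  strict_chain a eA -> strict_chain c eC -> exists b : nat -> B -> Prop, strict_chain (a + c) b.
Proof.
have [inj_f ker_g surj_g] := fg_exact.
move=> [Asub Ast] [Csub Cst].
exists (fun i => if (i <= a)%N then fimage f (eA i) else eC (i - a)%N \o g); split.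
  move=> i le_iac; case: ifP => le_ia; first exact/is_submod_fimage/Asub.
  by apply/is_submod_preim/Csub; lia.
move=> i lt_iac; have [lt_ia|ge_ia] := ltnP i a.
  rewrite ltnW //; have [incl [x [x1 nx]]] := Ast i lt_ia; split.
    by move=> _ [u /incl eu <-]; exists u.
  by exists (f x); split; [exists x | move=> [u eu /inj_f eq_ux]; rewrite -eq_ux in nx].
have [->|ne_ia] := eqVneq i a.
  rewrite leqnn subSnn.
  have c_gt0 : (0 < c)%N by lia.
  have [_ [w [w1 nw]]] := Cst 0%N c_gt0.
  have [C0 _ _] := Csub 0%N (leq0n c).
  have [C1 _ _] := Csub 1%N c_gt0.
  split=> [_ [u _ <-] /=|]; first by have /ker_g -> : exists x, f x = f u by exists u.
  have [y gy] := surj_g w; exists y; split=> [/=|[u _ fu]]; first by rewrite gy.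
  have gy0 : g y = 0 by apply/ker_g; exists u.
  by apply: nw; rewrite -gy gy0.
have lt_ai : (a < i)%N by rewrite ltn_neqAle eq_sym ne_ia ge_ia.
rewrite leqNgt lt_ai /= subSn //.
have lt_iac' : (i - a < c)%N by lia.
have [incl [w [w1 nw]]] := Cst (i - a)%N lt_iac'.
split=> [y /incl //|]; have [y gy] := surj_g w.
by exists y; rewrite /= gy.
Qed.

Lemma short_exact_length {a b c} :
  has_length A a -> has_length B b -> has_length C c -> b = (a + c)%N.
Proof.
move=> lenA [[eB chB] maxB] lenC; apply/eqP.
rewrite eqn_leq (short_exact_chain_le lenA lenC chB) /=.
have [[[eA chA] _] [[eC chC] _]] := (lenA, lenC).
by have [eAC chAC] := short_exact_chain_cat chA chC; apply: maxB chAC.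
Qed.

End ShortExact.

Definition eventually_minfty (P : int -> Prop) : Prop :=
  exists N : int, forall n, n <= N -> P n.

Lemma signz_addr1 (m : int) : (-1 : int) ^ (m + 1) = - (-1) ^ m.
Proof. by rewrite exprzDr ?unitrN1 // expr1z mulrN1. Qed.

Lemma signz_addr_even (m : int) (d : nat) : ~~ odd d -> (-1 : int) ^ (m + d%:Z) = (-1) ^ m.
Proof.
by move=> d_even; rewrite exprzDr ?unitrN1 // -exprnP -signr_odd (negbTE d_even) mulr1.
Qed.

Lemma hfun_eventually {d} {lamY lamZ : int -> nat} : ~~ odd d ->
  eventually_minfty (fun m =>
    (lamY (m + 1))%:Z = (lamZ m)%:Z + (lamY (m + d%:Z + 1))%:Z) ->
  eventually_minfty (fun n =>
    hfun d lamZ n = hfun d lamY (n + d%:Z + 1) - hfun d lamY (n + 1)).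
Proof.
move=> d_even [N lamE]; exists (N - d%:Z) => n le_nN.
rewrite /hfun -sumrB; apply: eq_bigr => i _.
have -> : n + d%:Z + 1 + (i : nat)%:Z = n + (i : nat)%:Z + d%:Z + 1 by ring.
have -> : n + 1 + (i : nat)%:Z = n + (i : nat)%:Z + 1 by ring.
have : n + (i : nat)%:Z <= N by have := ltn_ord i; lia.
move: (n + _) => m /lamE ->.
rewrite !signz_addr1 signz_addr_even //; ring.
Qed.

Lemma negdiff_iter_eventually d k (f g : int -> int) :
  eventually_minfty (fun n => f n = g n) ->
  eventually_minfty (fun n => negdiff_iter d k f n = negdiff_iter d k g n).
Proof.
move=> fgE; elim: k => [//|k [N IH]]; exists (N - d%:Z - 1) => n le_nN /=.
by rewrite /negdiff !IH //; lia.
Qed.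

Lemma negdiff_iter_oppS d k (f : int -> int) n :
  negdiff_iter d k (fun m => - negdiff d f m) n = - negdiff_iter d k.+1 f n.
Proof.
elim: k n => [//|k IH] n.
by rewrite /= [in LHS]/negdiff !IH opprK addrC -opprB.
Qed.

(* R0 = R^0; MY n = Hom_T(X, Sigma^n Y); MZ n = Hom_T(X, Sigma^n (Y//z));
   lamY n = lambda^n(X,Y), lamZ n = lambda^n(X, Y//z). *)
Theorem lemma5p2 (R0 : comPzRingType) (d : nat) (Hd : (2 <= d)%N) (Hdeven : ~~ odd d)
  (MY MZ : int -> lmodType R0) (lamY lamZ : int -> nat)
  (HlY : forall n, has_length (MY n) (lamY n))
  (HlZ : forall n, has_length (MZ n) (lamZ n))
  (Hses : exists N : int, forall n : int, n <= N ->
     exists (f : {linear MZ n -> MY (n + 1)})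
            (g : {linear MY (n + 1) -> MY (n + d%:Z + 1)}), short_exact f g) :
  (exists N : int, forall n : int, n <= N ->
     hfun d lamZ n = hfun d lamY (n + d%:Z + 1) - hfun d lamY (n + 1)) /\
  (forall s : nat, (1 <= s)%N -> exists N : int, forall n : int, n <= N ->
     negdiff_iter d s.-1 (hfun d lamZ) n = - negdiff_iter d s (hfun d lamY) n).
Proof.
have lamE : eventually_minfty (fun m =>
    (lamY (m + 1))%:Z = (lamZ m)%:Z + (lamY (m + d%:Z + 1))%:Z).
  have [N HN] := Hses; exists N => m /HN [f [g fg]].
  by rewrite (short_exact_length fg (HlZ m) (HlY _) (HlY _)).
have hZ := hfun_eventually Hdeven lamE.
split; first exact: hZ.
case=> [//|k] _.
have [|N HN] := negdiff_iter_eventually d k (hfun d lamZ) (fun n => - negdiff d (hfun d lamY) n).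
  by have [N HN] := hZ; exists N => n /HN ->; rewrite /negdiff opprB.
by exists N => n /HN ->; apply: negdiff_iter_oppS.
Qed.
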